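(* Let $X$ be a permutation group on a set $U$ and $Y$ a permutation group on a set $W$, and let $G=X\times Y$ act on $U\times W$ in product action. Let $\Gamma$ be a $G$-arc-transitive digraph with vertex set $U\times W$. Then $\Gamma\cong\Gamma_1\times\Gamma_2$ for some $X$-arc-transitive digraph $\Gamma_1$ and some $Y$-arc-transitive digraph $\Gamma_2$.
   Context: A digraph is a pair $(V,A)$ with $A\subseteq V\times V$. For a group $H$ acting on the vertex set of a digraph $\Delta$ by automorphisms, $\Delta$ is $H$-arc-transitive if $H$ is transitive on the arc set of $\Delta$. Product action: $(x,y)\in X\times Y$ sends $(u,w)$ to $(u^x,w^y)$. The tensor product $\Gamma_1\times\Gamma_2$ of $\Gamma_1=(V_1,A_1)$ and $\Gamma_2=(V_2,A_2)$ has vertex set $V_1\times V_2$, with $(u_1,u_2)$ pointing to $(v_1,v_2)$ iff $(u_1,v_1)\in A_1$ and $(u_2,v_2)\in A_2$. *)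

From mathcomp Require Import all_boot all_fingroup.
Set Implicit Arguments. Unset Strict Implicit. Unset Printing Implicit Defensive.

(* A digraph on a finite vertex type V is given by its arc set A : {set V * V}. *)

Definition arc_transitive (gT : finGroupType) (V : finType)
  (act : V -> gT -> V) (H : {set gT}) (A : {set V * V}) : Prop :=
  (forall h, h \in H -> forall u v,
      ((act u h, act v h) \in A) = ((u, v) \in A)) /\
  (forall a b, a \in A -> b \in A ->
      exists2 h, h \in H & (act a.1 h, act a.2 h) = b).

Definition pact (T : finType) (u : T) (x : {perm T}) : T := x u.

Definition prod_act (U W : finType) (p : U * W) (g : {perm U} * {perm W})
  : U * W := (g.1 p.1, g.2 p.2).

Definition tensor (U W : finType) (A1 : {set U * U}) (A2 : {set W * W})
  : {set (U * W) * (U * W)} :=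
  [set p | ((p.1.1, p.2.1) \in A1) && ((p.1.2, p.2.2) \in A2)].

Definition dig_iso (V1 V2 : finType) (A : {set V1 * V1}) (B : {set V2 * V2})
  : Prop :=
  exists f : V1 -> V2, bijective f /\
    forall u v, ((f u, f v) \in B) = ((u, v) \in A).

From mathcomp Require Import all_boot all_fingroup all_solvable.

Set Implicit Arguments.
Unset Strict Implicit.
Unset Printing Implicit Defensive.

(* The candidate factors are the projections A1, A2 of the arc set A onto the
   two coordinates.  The subgroups X x 1 and 1 x Y of X x Y preserve A, so
   X preserves A1 and Y preserves A2, and projecting the elements of X x Y
   that move one arc of A to another gives transitivity on A1 and A2.
   Finally A = A1 x A2: given ((u1,w),(v1,w')) and ((z,u2),(z',v2)) in A,
   some (x,y) maps the first arc to the second, and then (1,y) maps it to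
   ((u1,u2),(v1,v2)), which is therefore an arc. *)

Definition arcs_fst (U W : finType) (A : {set (U * W) * (U * W)}) : {set U * U} :=
  [set p | [exists q : W * W, ((p.1, q.1), (p.2, q.2)) \in A]].

Definition arcs_snd (U W : finType) (A : {set (U * W) * (U * W)}) : {set W * W} :=
  [set q | [exists p : U * U, ((p.1, q.1), (p.2, q.2)) \in A]].

Section ProjectionsOfArcs.

Variables (U W : finType) (A : {set (U * W) * (U * W)}).

Lemma arcs_fstP u v :
  reflect (exists w w', ((u, w), (v, w')) \in A) ((u, v) \in arcs_fst A).
Proof.
rewrite inE; apply: (iffP existsP) => [[[w w'] /= uvA] | [w [w' uvA]]].
  by exists w, w'.
by exists (w, w').
Qed.

Lemma arcs_sndP w w' :
  reflect (exists u v, ((u, w), (v, w')) \in A) ((w, w') \in arcs_snd A).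
Proof.
rewrite inE; apply: (iffP existsP) => [[[u v] /= uvA] | [u [v uvA]]].
  by exists u, v.
by exists (u, v).
Qed.

Lemma subset_tensor_arcs : A \subset tensor (arcs_fst A) (arcs_snd A).
Proof.
apply/subsetP => -[[u w] [v w']] uvA; rewrite inE /=.
by apply/andP; split; [apply/arcs_fstP; exists w, w' | apply/arcs_sndP; exists u, v].
Qed.

End ProjectionsOfArcs.

Section ProductActionArcTransitive.

Variables (U W : finType) (X : {group {perm U}}) (Y : {group {perm W}}).
Variable A : {set (U * W) * (U * W)}.
Hypothesis arcT : arc_transitive (@prod_act U W) (setX X Y) A.

Let A1 := arcs_fst A.
Let A2 := arcs_snd A.

Lemma arc_act_fst x u v w w' : x \in X ->
  (((x u, w), (x v, w')) \in A) = (((u, w), (v, w')) \in A).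
Proof.
move=> Xx; have X1 : ((x, 1%g) : {perm U} * {perm W}) \in setX X Y.
  by rewrite in_setX Xx group1.
by have := arcT.1 _ X1 (u, w) (v, w'); rewrite /prod_act /= !perm1.
Qed.

Lemma arc_act_snd y u v w w' : y \in Y ->
  (((u, y w), (v, y w')) \in A) = (((u, w), (v, w')) \in A).
Proof.
move=> Yy; have Y1 : ((1%g, y) : {perm U} * {perm W}) \in setX X Y.
  by rewrite in_setX Yy group1.
by have := arcT.1 _ Y1 (u, w) (v, w'); rewrite /prod_act /= !perm1.
Qed.

Lemma arc_transitive_fst : arc_transitive (@pact U) X A1.
Proof.
split=> [x Xx u v | [a1 a2] [b1 b2] /arcs_fstP[w [w' aA]] /arcs_fstP[z [z' bA]]].
  apply/arcs_fstP/arcs_fstP => -[w [w' uvA]]; exists w, w'.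
    by rewrite -(arc_act_fst _ _ _ _ Xx).
  by rewrite (arc_act_fst _ _ _ _ Xx).
have [[x y] /setXP[Xx _] [/= xa1 _ xa2 _]] := arcT.2 _ _ aA bA.
by exists x; rewrite // /pact xa1 xa2.
Qed.

Lemma arc_transitive_snd : arc_transitive (@pact W) Y A2.
Proof.
split=> [y Yy w w' | [a1 a2] [b1 b2] /arcs_sndP[u [v aA]] /arcs_sndP[z [z' bA]]].
  apply/arcs_sndP/arcs_sndP => -[u [v uvA]]; exists u, v.
    by rewrite -(arc_act_snd _ _ _ _ Yy).
  by rewrite (arc_act_snd _ _ _ _ Yy).
have [[x y] /setXP[_ Yy] [/= _ ya1 _ ya2]] := arcT.2 _ _ aA bA.
by exists y; rewrite // /pact ya1 ya2.
Qed.

Lemma tensor_arcs : tensor A1 A2 = A.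
Proof.
apply/eqP; rewrite eqEsubset subset_tensor_arcs andbT.
apply/subsetP => -[[u1 u2] [v1 v2]]; rewrite inE /=.
case/andP=> /arcs_fstP[w [w' aA]] /arcs_sndP[z [z' bA]].
have [[x y] /setXP[_ Yy] [/= _ yw _ yw']] := arcT.2 _ _ aA bA.
by rewrite -yw -yw' arc_act_snd.
Qed.

End ProductActionArcTransitive.

Lemma dig_iso_refl (V : finType) (A : {set V * V}) : dig_iso A A.
Proof. by exists id; split; first exists id. Qed.

Theorem lemma2p6 (U W : finType) (X : {group {perm U}}) (Y : {group {perm W}})
  (A : {set (U * W) * (U * W)}) :
  arc_transitive (@prod_act U W) (setX X Y) A ->
  exists (A1 : {set U * U}) (A2 : {set W * W}),
    [/\ arc_transitive (@pact U) X A1,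
        arc_transitive (@pact W) Y A2 &
        dig_iso A (tensor A1 A2)].
Proof.
move=> arcT; exists (arcs_fst A), (arcs_snd A); split.
- exact: arc_transitive_fst arcT.
- exact: arc_transitive_snd arcT.
- by rewrite (tensor_arcs arcT); apply: dig_iso_refl.
Qed.
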